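(* Let $\mathcal{Y}=\mathbb{R}$, $K\ge1$, and $\alpha\in(0,1)$ with $(1-\alpha)K$ a positive integer. Let $q_k=1/K$ for all $k\in[K]$, and fix integers $n_1,\dots,n_K\ge1$ with $n_1=\min_k n_k$. Let the score function be $s(x,y)=y$, and let $\Pi_1,\dots,\Pi_K$ be distributions on $\mathcal{X}^1\times\mathbb{R}$ whose marginals on the response $Y$ are: $\textnormal{Unif}[0,1]$ for $k=1$; $\textnormal{Unif}[-1,0]$ for $k=2,\dots,(1-\alpha)K$; and $\textnormal{Unif}[1,2]$ for $k=(1-\alpha)K+1,\dots,K$. Suppose calibration data $(X_1,Y_1),\dots,(X_n,Y_n)$, $n=\sum_k n_k$, are generated independently with, for each $k$ and each $i\in\{n_1+\dots+n_{k-1}+1,\dots,n_1+\dots+n_k\}$, $X_i^0=k$ and $(X_i^1,Y_i)\sim\Pi_k$, and an independent test point satisfies $\mathbb{P}\{X^0_{n+1}=k\}=1/K$ and $(X^1_{n+1},Y_{n+1})\mid X^0_{n+1}=k\sim\Pi_k$. Then the GWCP prediction set $\widehat{C}_n$ (defined in the context) satisfies \[\mathbb{P}\{Y_{n+1}\in\widehat{C}_n(X_{n+1})\}=1-\alpha-\frac{1}{K(\min_k n_k+1)}.\]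
   Context: Features are $x=(x^0,x^1)\in[K]\times\mathcal{X}^1$ with $x^0$ the group label. For a probability distribution $\mu$ on $\mathbb{R}\cup\{+\infty\}$ and $\tau\in(0,1]$, $\textnormal{Quantile}_{\tau}(\mu)=\inf\{t\in\mathbb{R}\cup\{+\infty\}:\mu([-\infty,t])\ge\tau\}$; $\delta_s$ is the point mass at $s$. With $s_i=s(X_i,Y_i)$ and $\widehat{P}^{(k)}_{\textnormal{score}}=\frac{1}{n_k}\sum_{i\le n:\,X_i^0=k}\delta_{s_i}$, the GWCP set is $\widehat{C}_n(x)=\{y: s(x,y)\le\widehat{q}\}$ with $\widehat{q}=\textnormal{Quantile}_{1-\alpha}\big(\sum_{k=1}^K q_k\widehat{P}^{(k)}_{\textnormal{score}}\big)$. *)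

From HB Require Import structures.
From mathcomp Require Import all_boot all_order all_algebra.
From mathcomp Require Import all_classical all_reals all_analysis.
Set Implicit Arguments. Unset Strict Implicit. Unset Printing Implicit Defensive.
Import Order.TTheory GRing.Theory Num.Theory.
Local Open Scope classical_set_scope.
Local Open Scope ring_scope.

Definition pointmass (R : realType) (a : \bar R) (A : set (\bar R)) : \bar R :=
  ((\1_A a : R)%:E).

Definition quantile (R : realType) (tau : R) (mu : set (\bar R) -> \bar R) : \bar R :=
  ereal_inf [set t : \bar R | t != -oo%E /\ (tau%:E <= mu [set x | (x <= t)%E])%E].

(* Calibration data are indexed by group: data k j, j < n k, is the j-th
   calibration point (X^1, Y) of group k. *)
Definition gwcp_mixture (R : realType) (X1 : Type) (K : nat) (n : 'I_K -> nat)
  (q : 'I_K -> R) (s : 'I_K * X1 -> R -> R)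
  (data : forall k : 'I_K, 'I_(n k) -> (X1 * R)%type) : set (\bar R) -> \bar R :=
  fun A => (\sum_(k < K) (q k)%:E *
     ((n k)%:R^-1%:E * \sum_(j < n k) pointmass (s (k, (data k j).1) (data k j).2)%:E A))%E.

Arguments gwcp_mixture {R X1 K} n q s data.

Definition gwcp_qhat (R : realType) (X1 : Type) (K : nat) (n : 'I_K -> nat)
  (q : 'I_K -> R) (alpha : R) (s : 'I_K * X1 -> R -> R)
  (data : forall k : 'I_K, 'I_(n k) -> (X1 * R)%type) : \bar R :=
  quantile (1 - alpha) (gwcp_mixture n q s data).

Arguments gwcp_qhat {R X1 K} n q alpha s data.

Definition gwcp_set (R : realType) (X1 : Type) (K : nat) (n : 'I_K -> nat)
  (q : 'I_K -> R) (alpha : R) (s : 'I_K * X1 -> R -> R)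
  (data : forall k : 'I_K, 'I_(n k) -> (X1 * R)%type) (x : 'I_K * X1) : set R :=
  [set y : R | ((s x y)%:E <= gwcp_qhat n q alpha s data)%E].

Arguments gwcp_set {R X1 K} n q alpha s data x.

Definition unif01 (R : realType) : set R -> \bar R := uniform_prob (@ltr01 R).
Lemma ltrN10' (R : realType) : (-1 : R) < 0. Proof. by rewrite oppr_lt0 ltr01. Qed.
Definition unifN10 (R : realType) : set R -> \bar R := uniform_prob (ltrN10' R).
Lemma ltr12' (R : realType) : (1 : R) < 2. Proof. by rewrite ltrDl ltr01. Qed.
Definition unif12 (R : realType) : set R -> \bar R := uniform_prob (ltr12' R).

(* Mutual independence of the n calibration points Z k j and the test point (G, W):
   product rule over the generating pi-systems of the individual sigma-fields
   (every measurable B k j for the calibration points, and every event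
   {G in S} ∩ {W in C} for the test point). *)
Definition independent_data (R : realType) (d : measure_display) (T : measurableType d)
  (dZ : measure_display) (Zt : measurableType dZ) (P : probability T R)
  (K : nat) (n : 'I_K -> nat) (Z : forall k : 'I_K, 'I_(n k) -> T -> Zt)
  (G : T -> 'I_K) (W : T -> Zt) : Prop :=
  forall (B : forall k : 'I_K, 'I_(n k) -> set Zt) (S : set 'I_K) (C : set Zt),
    (forall k j, measurable (B k j)) -> measurable C ->
    P ((\bigcap_(k in [set: 'I_K]) \bigcap_(j in [set: 'I_(n k)]) (Z k j @^-1` B k j))
        `&` (G @^-1` S) `&` (W @^-1` C))
    = (\prod_(k < K) \prod_(j < n k) P (Z k j @^-1` B k j) * P (G @^-1` S `&` W @^-1` C))%E.

Arguments independent_data {R d T dZ Zt} P {K} n Z G W.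

(* Up to null events, every calibration score lies in the support of the
   uniform law of its group, and the test score lies in the interior of the
   support of the law of its own group.  On that event the GWCP set contains
   the test response exactly when the fractions of calibration scores below
   the test score, summed over the K groups, stay below m = (1 - alpha) K:
   a test point from one of the m - 1 groups with law Unif[-1,0] is always
   covered, one from a group with law Unif[1,2] never is, and one from group 1
   is covered unless it exceeds all n_1 calibration scores of group 1.  That
   last event has probability 1/(n_1 + 1).  Independence is only available as
   a product rule on boxes, so this probability is obtained by squeezing the
   event between finite unions of boxes whose probabilities are the lower and
   upper Riemann sums of x^n_1 on [0,1]. *)

From HB Require Import structures.
From mathcomp Require Import all_boot all_order all_algebra.
From mathcomp Require Import all_classical all_reals all_analysis.
From mathcomp Require Import ring lra.
Import Order.TTheory GRing.Theory Num.Theory.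
Local Open Scope classical_set_scope.
Local Open Scope ring_scope.

Section power_sums.
Variable R : realFieldType.

Lemma subrXX_bounds (a b : R) (n : nat) : 0 <= b <= a ->
  n.+1%:R * b ^+ n * (a - b) <= a ^+ n.+1 - b ^+ n.+1 <= n.+1%:R * a ^+ n * (a - b).
Proof.
case/andP=> b_ge0 b_le_a; have a_ge0 := le_trans b_ge0 b_le_a.
have sum_const (c : R) : n.+1%:R * c = \sum_(i < n.+1) c.
  by rewrite sumr_const card_ord mulr_natl.
have expE (c : R) (i : 'I_n.+1) : c ^+ n = c ^+ (n - i) * c ^+ i.
  by rewrite -exprD subnK // -ltnS.
have [lo hi] : n.+1%:R * b ^+ n <= \sum_(i < n.+1) a ^+ (n - i) * b ^+ i
            /\ \sum_(i < n.+1) a ^+ (n - i) * b ^+ i <= n.+1%:R * a ^+ n.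
  rewrite !sum_const; split; apply: ler_sum => i _.
  - by rewrite (expE b i) ler_wpM2r ?exprn_ge0 // lerXn2r // nnegrE.
  - by rewrite (expE a i) ler_wpM2l ?exprn_ge0 // lerXn2r // nnegrE.
have ab0 : 0 <= a - b by rewrite subr_ge0.
by rewrite subrXX /= [(a - b) * _]mulrC (ler_wpM2r ab0 lo) (ler_wpM2r ab0 hi).
Qed.

Definition lower_power_sum (n N : nat) : R := \sum_(i < N) (i%:R / N%:R) ^+ n / N%:R.
Definition upper_power_sum (n N : nat) : R := \sum_(i < N) (i.+1%:R / N%:R) ^+ n / N%:R.

Lemma power_sums_bounds n N : (0 < N)%N ->
  n.+1%:R * lower_power_sum n N <= 1 <= n.+1%:R * upper_power_sum n N.
Proof.
move=> N_gt0; have N_neq0 : N%:R != 0 :> R by rewrite pnatr_eq0 -lt0n.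
pose x (i : nat) : R := i%:R / N%:R.
have telescope : \sum_(i < N) (x i.+1 ^+ n.+1 - x i ^+ n.+1) = 1.
  rewrite -(big_mkord xpredT (fun i => x i.+1 ^+ n.+1 - x i ^+ n.+1)).
  by rewrite telescope_sumr // /x divff // expr1n mul0r expr0n subr0.
have step_bounds (i : nat) : n.+1%:R * (x i ^+ n / N%:R) <= x i.+1 ^+ n.+1 - x i ^+ n.+1
                             <= n.+1%:R * (x i.+1 ^+ n / N%:R).
  have gap : x i.+1 - x i = N%:R^-1 by rewrite /x -mulrBl -natrB // subSnn mul1r.
  rewrite !mulrA -gap; apply: subrXX_bounds.
  by rewrite /x divr_ge0 //= ler_wpM2r ?invr_ge0 // ler_nat.
rewrite /lower_power_sum /upper_power_sum !mulr_sumr -[X in _ <= X <= _]telescope.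
by apply/andP; split; apply: ler_sum => i _; case/andP: (step_bounds i).
Qed.

Lemma upper_sub_lower_power_sum n N : (0 < N)%N ->
  upper_power_sum n N - lower_power_sum n N <= N%:R^-1.
Proof.
move=> N_gt0; have N_gt0' : 0 < N%:R :> R by rewrite ltr0n.
pose x (i : nat) : R := i%:R / N%:R.
rewrite /upper_power_sum /lower_power_sum -sumrB.
under eq_bigr do rewrite -mulrBl.
rewrite -mulr_suml -(big_mkord xpredT (fun i => x i.+1 ^+ n - x i ^+ n)) telescope_sumr //.
by rewrite /x divff ?gt_eqF // expr1n mul0r ler_pdivrMr // mulVf ?gt_eqF // lerBlDr lerDl.
Qed.

Lemma dist_power_sums_le n N (x : R) : (0 < N)%N ->
  lower_power_sum n N <= x <= upper_power_sum n N -> `|x - n.+1%:R^-1| <= N%:R^-1.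
Proof.
move=> N_gt0 /andP[lo hi]; have n_gt0 : 0 < n.+1%:R :> R by rewrite ltr0n.
have /andP[Llo Uhi] := power_sums_bounds n N N_gt0.
rewrite -ler_pdivlMl // mulr1 in Llo; rewrite -ler_pdivrMl // mulr1 in Uhi.
have := upper_sub_lower_power_sum n N N_gt0.
rewrite ler_norml => gap; set c := n.+1%:R^-1 in Llo Uhi *; set e := N%:R^-1 in gap *.
by apply/andP; split; lra.
Qed.

End power_sums.

Section power_sums_squeeze.
Variable R : archiRealFieldType.

Lemma eq0_of_norm_le_invn (x : R) : (forall N, (0 < N)%N -> `|x| <= N%:R^-1) -> x = 0.
Proof.
move=> small; apply/eqP/negPn/negP => x_neq0.
have x_gt0 : 0 < `|x| by rewrite normr_gt0.
have /archi_boundP : 0 <= `|x|^-1 by rewrite invr_ge0 ltW.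
set M := Num.bound _ => lt_M.
have := small M.+1 isT.
rewrite -[`|x|]invrK lef_pV2 ?posrE ?invr_gt0 ?ltr0n // => le_M.
by have := le_lt_trans le_M lt_M; rewrite ltr_nat ltnNge leqnSn.
Qed.

Lemma power_sums_squeeze n (x : R) :
  (forall N, (0 < N)%N -> lower_power_sum R n N <= x <= upper_power_sum R n N) ->
  x = n.+1%:R^-1.
Proof.
move=> sandwich; apply/eqP; rewrite -subr_eq0; apply/eqP/eq0_of_norm_le_invn.
by move=> N N_gt0; apply: dist_power_sums_le (sandwich N N_gt0).
Qed.

End power_sums_squeeze.

Section quantile_finite_support.
Variable R : realType.

Lemma le_quantile (mu : set (\bar R) -> R) (s : seq R) (tau y : R) :
  (forall A B, A `<=` B -> mu A <= mu B) ->
  (forall A B, {in s, forall x, A x%:E <-> B x%:E} -> mu A = mu B) ->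
  (y%:E <= quantile tau (fun A => (mu A)%:E))%E = (mu [set x | (x < y%:E)%E] < tau).
Proof.
move=> mu_mono mu_supp; apply/idP/idP => [y_le_q | mu_lt].
  rewrite ltNge; apply/negP => tau_le.
  (* [mu] only sees the points of [s], so [mu [-oo, t] = mu [-oo, y)] for the
     largest point [t] of [s] below [y], or [t = y - 1] if there is none. *)
  pose t := \big[Order.max/(y - 1)]_(x <- s | x < y) x.
  have t_lt_y : t < y by apply: bigmax_lt => //; rewrite ltrBlDr ltrDl.
  have mu_t : mu [set x | (x <= t%:E)%E] = mu [set x | (x < y%:E)%E].
    apply: mu_supp => x xs /=; rewrite lee_fin lte_fin.
    split => [/le_lt_trans->//|xy]; exact: le_bigmax_seq.
  have : (quantile tau (fun A => (mu A)%:E) <= t%:E)%E.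
    by apply: ereal_inf_lbound; split => //; rewrite lee_fin mu_t.
  by move/(le_trans y_le_q); rewrite lee_fin leNgt t_lt_y.
apply/ereal_infP => t [_]; rewrite lee_fin => tau_le; rewrite leNgt; apply/negP => t_lt_y.
have : mu [set x | (x <= t)%E] <= mu [set x | (x < y%:E)%E].
  by apply: mu_mono => x /= /le_lt_trans; apply.
by move/(le_trans tau_le); rewrite leNgt mu_lt.
Qed.

End quantile_finite_support.

Definition frac_below (R : realFieldType) (N : nat) (ys : 'I_N -> R) (y : R) : R :=
  N%:R^-1 * \sum_(j < N) (ys j < y)%R%:R.

Arguments frac_below {R N}.

Section fraction_below.
Variable R : realFieldType.

Variables (N : nat) (ys : 'I_N -> R) (y : R).

Lemma frac_below_ge0 : 0 <= frac_below ys y.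
Proof. by rewrite mulr_ge0 ?invr_ge0 ?sumr_ge0. Qed.

Lemma frac_below_eq0 : (forall j, y <= ys j) -> frac_below ys y = 0.
Proof. by move=> y_le; rewrite /frac_below big1 ?mulr0 // => j _; rewrite ltNge y_le. Qed.

Hypothesis N_gt0 : (0 < N)%N.

Lemma frac_below_le1 : frac_below ys y <= 1.
Proof.
rewrite ler_pdivrMl ?ltr0n // mulr1.
have -> : N%:R = \sum_(j < N) 1 :> R by rewrite sumr_const card_ord.
by apply: ler_sum => j _; rewrite lern1 leq_b1.
Qed.

Lemma frac_below_eq1 : (forall j, ys j < y) -> frac_below ys y = 1.
Proof.
move=> lt_y; rewrite /frac_below (eq_bigr (fun=> 1)) => [|j _]; last by rewrite lt_y.
by rewrite sumr_const card_ord mulVf // pnatr_eq0 -lt0n.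
Qed.

Lemma frac_below_lt1 : frac_below ys y < 1 <-> exists j, y <= ys j.
Proof.
split=> [lt1|[j y_le]].
  apply: contrapT => none; move: lt1; rewrite frac_below_eq1 ?ltxx // => j.
  by rewrite ltNge; apply/negP => y_le; apply: none; exists j.
rewrite ltr_pdivrMl ?ltr0n // mulr1 (bigD1 j) //= (ltNge (ys j)) y_le add0r.
apply: (@le_lt_trans _ _ (\sum_(i < N | i != j) 1)).
  by apply: ler_sum => i _; rewrite lern1 leq_b1.
by rewrite sumr_const ltr_nat cardC1 card_ord prednK.
Qed.

End fraction_below.

Section gwcp_set_membership.
Variables (R : realType) (X1 : Type) (K : nat) (n : 'I_K -> nat) (q : 'I_K -> R).
Variables (alpha : R) (s : 'I_K * X1 -> R -> R).
Variable data : forall k : 'I_K, 'I_(n k) -> (X1 * R)%type.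
Hypothesis q_ge0 : forall k, 0 <= q k.

Lemma in_gwcp_set x y : (y \in gwcp_set n q alpha s data x) =
  (\sum_(k < K) q k * frac_below (fun j => s (k, (data k j).1) (data k j).2) (s x y)
   < 1 - alpha).
Proof.
pose score k j := s (k, (data k j).1) (data k j).2.
pose scores := [seq score k j | k : 'I_K <- enum 'I_K, j : 'I_(n k) <- enum 'I_(n k)].
pose mass A := \sum_(k < K) q k * ((n k)%:R^-1 * \sum_(j < n k) \1_A (score k j)%:E).
have mixtureE : gwcp_mixture n q s data = fun A => (mass A)%:E.
  apply/funext => A; rewrite /gwcp_mixture -sumEFin; apply: eq_bigr => k _.
  by rewrite /pointmass sumEFin -!EFinM.
have mass_mono A B : A `<=` B -> mass A <= mass B.
  move=> AB; apply: ler_sum => k _; rewrite ler_wpM2l ?ler_wpM2l ?invr_ge0 //.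
  apply: ler_sum => j _; rewrite !indicE.
  by case: (boolP (_ \in A)) => [/set_mem/AB/mem_set->|]; rewrite ?ler0n.
have mass_supp (A B : set \bar R) :
    {in scores, forall z, A z%:E <-> B z%:E} -> mass A = mass B.
  move=> AB; apply: eq_bigr => k _; congr (_ * (_ * _)); apply: eq_bigr => j _.
  have /AB AB_kj : score k j \in scores by apply: allpairs_f_dep; rewrite mem_enum.
  rewrite !indicE (_ : ((score k j)%:E \in A) = ((score k j)%:E \in B)) //.
  by apply/idP/idP => /set_mem/AB_kj/mem_set.
have -> : (y \in gwcp_set n q alpha s data x) =
    ((s x y)%:E <= quantile (1 - alpha) (fun A => (mass A)%:E))%E.
  by rewrite /gwcp_set mem_setE unfold_in /gwcp_qhat mixtureE.
rewrite (le_quantile _ _ _ _ _ mass_mono mass_supp).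
suff -> : mass [set z | (z < (s x y)%:E)%E] =
  \sum_(k < K) q k * frac_below (score k) (s x y) by [].
apply: eq_bigr => k _; congr (_ * (_ * _)); apply: eq_bigr => j _.
by rewrite indicE mem_setE unfold_in.
Qed.

End gwcp_set_membership.

Section uniform_prob_interval.
Variables (R : realType) (a b : R) (ab : a < b).

Lemma uniform_prob_itv (b1 b2 : bool) (lo hi : R) : a <= lo -> lo <= hi -> hi <= b ->
  uniform_prob ab [set` Interval (BSide b1 lo) (BSide b2 hi)] = ((hi - lo) / (b - a))%:E.
Proof.
move=> a_le_lo lo_le_hi hi_le_b; rewrite /uniform_prob.
rewrite (eq_integral (fun=> (b - a)^-1%:E)); last first.
  move=> x; rewrite inE /= in_itv /= /uniform_pdf.
  by case: b1; case: b2 => /= /andP[x_lo x_hi]; rewrite ifT //; apply/andP; split; lra.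
rewrite integral_cst //= lebesgue_measure_itv /= lte_fin.
case: ltP => [lo_lt_hi|hi_le_lo]; first by rewrite -EFinD -EFinM mulrC.
have -> : hi = lo by apply/eqP; rewrite eq_le lo_le_hi hi_le_lo.
by rewrite subrr mul0r mule0.
Qed.

Lemma uniform_prob_itv1 (b1 b2 : bool) :
  uniform_prob ab [set` Interval (BSide b1 a) (BSide b2 b)] = 1%:E.
Proof. by rewrite uniform_prob_itv ?lexx ?(ltW ab) // divff // subr_eq0 gt_eqF. Qed.

End uniform_prob_interval.

Lemma probability_setI_full {d} {T : measurableType d} {R : realType} (P : probability T R)
    {A E : set T} :
  measurable A -> measurable E -> P A = 1%E -> P (E `&` A) = P E.
Proof.
move=> mA mE PA1; rewrite [RHS](measureDI _ mE mA).
rewrite [X in (X + _)%E](_ : _ = 0%E) ?add0e //.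
apply: (subset_measure0 (measurableD mE mA) (measurableC mA)) => [x []//|].
by have := probability_setC P mA; rewrite PA1 subee.
Qed.

Lemma bigsetU_ordP (U : Type) (N : nat) (F : 'I_N -> set U) x :
  (\big[setU/set0]_(i < N) F i) x <-> exists i, F i x.
Proof.
split; last by move=> [i Fix]; rewrite (bigD1 i) //=; left.
by elim/big_ind: _ => // [A B IHA IHB [/IHA|/IHB] //|i _ Fix]; exists i.
Qed.

Section truncation_cells.
Variable R : realType.

Definition cell (N i : nat) : set R := [set` `[i%:R / N%:R, i.+1%:R / N%:R[].

Lemma cellE N i y : (0 < N)%N -> cell N i y <-> 0 <= y /\ Num.truncn (y * N%:R) = i.
Proof.
move=> N_gt0; have N_pos : 0 < N%:R :> R by rewrite ltr0n.
rewrite /cell /= in_itv /= -(ler_pM2r N_pos) -(ltr_pM2r N_pos) !divfK ?gt_eqF //.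
split=> [/andP[i_le y_lt]|[y_ge0 <-]]; last by apply: truncn_itv; rewrite mulr_ge0 // ltW.
have y_ge0 : 0 <= y * N%:R by apply: le_trans i_le.
by split; [rewrite -(pmulr_lge0 _ N_pos) | apply/eqP; rewrite truncn_eq // i_le].
Qed.

Lemma cell_endpoints {N} (i : 'I_N) :
  [/\ 0 <= i%:R / N%:R :> R, i%:R / N%:R <= i.+1%:R / N%:R :> R
    & i.+1%:R / N%:R <= 1 :> R].
Proof.
have N_gt0 : 0 < N%:R :> R by rewrite ltr0n (leq_ltn_trans _ (ltn_ord i)).
split; first by rewrite divr_ge0.
  by rewrite ler_wpM2r ?invr_ge0 ?ler_nat.
by rewrite ler_pdivrMr // mul1r ler_nat.
Qed.

End truncation_cells.

Lemma sum_ord_ltn (N M : nat) : (\sum_(k < N) (k < M))%N = minn N M.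
Proof.
elim: N => [|N IHN]; first by rewrite big_ord0 min0n.
rewrite big_ord_recr /= IHN; case: ltnP => [N_lt_M|M_le_N].
  by rewrite addn1 (minn_idPl N_lt_M).
by rewrite addn0 (minn_idPr (leqW M_le_N)).
Qed.

Section gwcp_undercoverage.
Variables (R : realType) (d : measure_display) (T : measurableType d) (P : probability T R).
Variables (d1 : measure_display) (X1 : measurableType d1).
Variables (K : nat) (alpha : R) (m : nat) (n : 'I_K -> nat) (k1 : 'I_K).
Variable Pi : 'I_K -> probability (X1 * R)%type R.
Variable Z : forall k : 'I_K, 'I_(n k) -> T -> (X1 * R)%type.
Variables (G : T -> 'I_K) (W : T -> (X1 * R)%type).
Hypotheses (hK : (0 < K)%N) (halpha : 0 < alpha < 1).
Hypotheses (hm : (0 < m)%N) (hmK : (1 - alpha) * K%:R = m%:R).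
Hypotheses (hn : forall k, (0 < n k)%N) (hk1 : nat_of_ord k1 = 0%N).
Hypothesis hPi1 : forall B, measurable B -> Pi k1 (setT `*` B) = unif01 B.
Hypothesis hPi2 : forall (k : 'I_K) B, (1 <= k < m)%N -> measurable B ->
  Pi k (setT `*` B) = unifN10 B.
Hypothesis hPi3 : forall (k : 'I_K) B, (m <= k)%N -> measurable B ->
  Pi k (setT `*` B) = unif12 B.
Hypotheses (hZmeas : forall k j, measurable_fun setT (Z k j))
  (hGmeas : forall k, measurable (G @^-1` [set k])) (hWmeas : measurable_fun setT W).
Hypothesis hZlaw : forall k j A, measurable A -> P (Z k j @^-1` A) = Pi k A.
Hypothesis hWlaw : forall k A, measurable A ->
  P (G @^-1` [set k] `&` W @^-1` A) = ((K%:R^-1)%:E * Pi k A)%E.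
Hypothesis hind : independent_data P n Z G W.

Lemma neq_k1_gt0 (k : 'I_K) : k != k1 -> (0 < k)%N.
Proof.
by apply: contraNT; rewrite -eqn0Ngt => /eqP k0; apply/eqP/val_inj; rewrite /= k0 hk1.
Qed.

Lemma k1_lt_m : (k1 < m)%N.
Proof. by rewrite hk1. Qed.

Lemma m_le_K : (m <= K)%N.
Proof.
have [alpha_gt0 _] := andP halpha.
suff : m%:R <= K%:R :> R by rewrite ler_nat.
by rewrite -hmK ger_pMl ?ltr0n // lerBlDr lerDl ltW.
Qed.

Lemma one_sub_alphaE : 1 - alpha = m%:R / K%:R.
Proof. by rewrite -hmK mulfK // pnatr_eq0 -lt0n. Qed.

Definition score_law (k : 'I_K) : set R -> \bar R :=
  if k == k1 then @unif01 R else if (k < m)%N then @unifN10 R else @unif12 R.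
Definition score_lo (k : 'I_K) : R := if k == k1 then 0 else if (k < m)%N then -1 else 1.
Definition score_hi (k : 'I_K) : R := if k == k1 then 1 else if (k < m)%N then 0 else 2.

Lemma Pi_score_law k B : measurable B -> Pi k (setT `*` B) = score_law k B.
Proof.
move=> mB; rewrite /score_law; case: eqP => [->|/eqP k_neq]; first exact: hPi1.
case: ltnP => [k_lt|k_ge]; last exact: hPi3.
by apply: hPi2; rewrite ?neq_k1_gt0.
Qed.

Lemma score_law_itv1 k (b1 b2 : bool) :
  score_law k [set` Interval (BSide b1 (score_lo k)) (BSide b2 (score_hi k))] = 1%E.
Proof.
by rewrite /score_law /score_lo /score_hi; case: eqP => _; [|case: ltnP => _];
  apply: uniform_prob_itv1.
Qed.

Definition box (B : 'I_K -> set R) (g : 'I_K) (C : set R) : set T :=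
  (\bigcap_(k in [set: 'I_K]) \bigcap_(j in [set: 'I_(n k)]) (Z k j @^-1` (setT `*` B k)))
  `&` (G @^-1` [set g]) `&` (W @^-1` (setT `*` C)).

Lemma measurable_box B g C : (forall k, measurable (B k)) -> measurable C ->
  measurable (box B g C).
Proof.
move=> mB mC; apply: measurableI; first apply: measurableI.
- apply: fin_bigcap_measurable => [|k _]; first exact: finite_finset.
  apply: fin_bigcap_measurable => [|j _]; first exact: finite_finset.
  by rewrite -[_ @^-1` _]setTI; apply: hZmeas => //; exact: measurableX.
- exact: hGmeas.
- by rewrite -[_ @^-1` _]setTI; apply: hWmeas => //; exact: measurableX.
Qed.

Lemma probability_box B g C : (forall k, measurable (B k)) -> measurable C ->
  P (box B g C) =
  (\prod_(k < K) \prod_(j < n k) score_law k (B k) * ((K%:R^-1)%:E * score_law g C))%E.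
Proof.
move=> mB mC; have mTB k : measurable ([set: X1] `*` B k) := measurableX measurableT (mB k).
have mTC : measurable ([set: X1] `*` C) := measurableX measurableT mC.
rewrite /box hind // (hWlaw g _ mTC) (Pi_score_law g _ mC); congr (_ * _)%E.
by apply: eq_bigr => k _; apply: eq_bigr => j _; rewrite hZlaw // Pi_score_law.
Qed.

Definition y_cal k j w := (Z k j w).2.
Definition y_test w := (W w).2.

(* The test score is kept off the endpoints of its support, a null event, so
   that it compares strictly with the calibration scores of the other groups. *)
Definition typical (g : 'I_K) : set T :=
  box (fun k => [set` `[score_lo k, score_hi k]]) g [set` `]score_lo g, score_hi g[].

Lemma measurable_typical g : measurable (typical g).
Proof. by apply: measurable_box => [k|]; apply: measurable_itv. Qed.

Lemma probability_typical g : P (typical g) = (K%:R^-1)%:E.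
Proof.
rewrite probability_box => [|k|]; try exact: measurable_itv.
rewrite score_law_itv1 mule1 big1 ?mul1e // => k _.
by rewrite big1 // => j _; apply: score_law_itv1.
Qed.

Lemma typicalP {g : 'I_K} {w : T} : typical g w ->
  (forall k j, score_lo k <= y_cal k j w <= score_hi k) /\
  score_lo g < y_test w < score_hi g.
Proof.
move=> [[cal_in _] [_ test_in]]; split; last by move: test_in; rewrite /= in_itv.
by move=> k j; have [_] := cal_in k I j I; rewrite /= in_itv.
Qed.

Definition frac_group k w := frac_below (fun j => y_cal k j w) (y_test w).

Lemma frac_group_eq0 {g k : 'I_K} {w : T} :
  typical g w -> y_test w <= score_lo k -> frac_group k w = 0.
Proof.
move=> /typicalP[cal_in _] test_le; apply: frac_below_eq0 => j.
by have /andP[lo_le _] := cal_in k j; apply: le_trans lo_le.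
Qed.

Lemma frac_group_eq1 {g k : 'I_K} {w : T} :
  typical g w -> score_hi k < y_test w -> frac_group k w = 1.
Proof.
move=> /typicalP[cal_in _] hi_lt; apply: frac_below_eq1 => [|j]; first exact: hn.
by have /andP[_ le_hi] := cal_in k j; apply: le_lt_trans hi_lt.
Qed.

Definition covered : set T := [set w | \sum_(k < K) frac_group k w < m%:R].

Lemma coverage_eventE :
  [set w | (W w).2 \in gwcp_set n (fun _ => K%:R^-1) alpha (fun x y => y)
                         (fun k j => Z k j w) (G w, (W w).1)] = covered.
Proof.
apply/funext => w /=; rewrite in_gwcp_set => [|_]; last by rewrite invr_ge0.
by rewrite -mulr_sumr one_sub_alphaE mulrC ltr_pM2r // invr_gt0 ltr0n.
Qed.

Lemma measurable_fun_lt_test k j : measurable_fun setT (fun w => y_cal k j w < y_test w).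
Proof.
apply: measurable_realfun.measurable_fun_ltr; apply: measurableT_comp measurable_snd _;
  [exact: hZmeas | exact: hWmeas].
Qed.

Lemma measurable_covered : measurable covered.
Proof.
have frac_sum_mfun : measurable_fun setT (fun w => \sum_(k < K) frac_group k w).
  apply: measurable_sum => k; apply: measurable_realfun.measurable_funM => //.
  apply: measurable_sum => j.
  by apply: (measurableT_comp (f := fun b : bool => b%:R : R)) (measurable_fun_lt_test k j).
have mtrue : measurable [set true] by [].
have := measurable_realfun.measurable_fun_ltr frac_sum_mfun (measurable_cst (m%:R : R))
  measurableT mtrue.
by rewrite setTI.
Qed.

Lemma sum_lt_m : \sum_(k < K) ((k < m)%N)%:R = m%:R :> R.
Proof. by rewrite -natr_sum sum_ord_ltn (minn_idPr m_le_K). Qed.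

Lemma sum_lt_m_neq_k1 : \sum_(k < K | k != k1) ((k < m)%N)%:R = m%:R - 1 :> R.
Proof. by rewrite -sum_lt_m [in RHS](bigD1 k1) //= k1_lt_m addrC addrK. Qed.

Lemma covered_lower {g : 'I_K} {w : T} :
  g != k1 -> (g < m)%N -> typical g w -> covered w.
Proof.
move=> g_neq g_lt typ; have [_ /andP[_]] := typicalP typ.
rewrite /score_hi (negbTE g_neq) g_lt => test_lt0.
rewrite /covered /= (bigD1 k1) //= (frac_group_eq0 typ); last by rewrite /score_lo eqxx ltW.
rewrite add0r (@le_lt_trans _ _ (m%:R - 1)) ?ltrBlDr ?ltrDl // -sum_lt_m_neq_k1.
apply: ler_sum => k k_neq; case: ltnP => [_|m_le_k]; first by apply: frac_below_le1.
rewrite (frac_group_eq0 typ) // /score_lo (negbTE k_neq) ltnNge m_le_k /=.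
by rewrite (le_trans (ltW test_lt0)) ?ler01.
Qed.

Lemma not_covered_upper {g : 'I_K} {w : T} : (m <= g)%N -> typical g w -> ~ covered w.
Proof.
move=> m_le_g typ; have g_neq : g != k1.
  by apply: contraTneq m_le_g => ->; rewrite -ltnNge k1_lt_m.
have [_ /andP[+ _]] := typicalP typ.
rewrite /score_lo (negbTE g_neq) ltnNge m_le_g /= => one_lt_test.
apply/negP; rewrite -leNgt /= (bigD1 k1) //= (frac_group_eq1 typ); last first.
  by rewrite /score_hi eqxx.
rewrite -[m%:R](subrK 1) addrC lerD2r -sum_lt_m_neq_k1.
apply: ler_sum => k k_neq; case: ltnP => [k_lt|_]; last exact: frac_below_ge0.
rewrite (frac_group_eq1 typ) // /score_hi (negbTE k_neq) k_lt.
by rewrite (lt_trans ltr01).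
Qed.

Lemma covered_k1 {w : T} :
  typical k1 w -> covered w <-> exists j, y_test w <= y_cal k1 j w.
Proof.
move=> typ; have [_] := typicalP typ; rewrite /score_lo /score_hi eqxx.
move=> /andP[test_gt0 test_lt1].
have -> : covered w = (frac_group k1 w < 1).
  rewrite /covered /= (bigD1 k1) //=.
  have -> : \sum_(k < K | k != k1) frac_group k w = m%:R - 1.
    rewrite -sum_lt_m_neq_k1; apply: eq_bigr => k k_neq; case: ltnP => [k_lt|m_le_k].
      by rewrite (frac_group_eq1 typ) // /score_hi (negbTE k_neq) k_lt.
    by rewrite (frac_group_eq0 typ) // /score_lo (negbTE k_neq) ltnNge m_le_k ltW.
  by rewrite addrC -ltrBrDl opprB addrC subrK.
exact: frac_below_lt1.
Qed.

Definition above_k1 : set T :=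
  \bigcap_(j in [set: 'I_(n k1)]) [set w | y_cal k1 j w < y_test w].

Lemma measurable_above_k1 : measurable above_k1.
Proof.
apply: fin_bigcap_measurable => [|j _]; first exact: finite_finset.
have mtrue : measurable [set true] by [].
by have := measurable_fun_lt_test k1 j measurableT _ mtrue; rewrite setTI.
Qed.

Definition below_box (c : R) (k : 'I_K) : set R :=
  if k == k1 then [set` `[0, c[] else [set` `[score_lo k, score_hi k]].

Lemma measurable_below_box c k : measurable (below_box c k).
Proof. by rewrite /below_box; case: eqP => _; exact: measurable_itv. Qed.

Lemma below_box_sub c k : c <= 1 -> below_box c k `<=` [set` `[score_lo k, score_hi k]].
Proof.
rewrite /below_box /score_lo /score_hi => c_le1; case: eqP => [_ y|_ y //].
by rewrite /= !in_itv /= => /andP[-> /ltW/le_trans->].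
Qed.

Lemma probability_below_box {c a b : R} : 0 <= c -> c <= 1 -> 0 <= a -> a <= b -> b <= 1 ->
  P (box (below_box c) k1 [set` `[a, b[]) = (c ^+ n k1 * (K%:R^-1 * (b - a)))%:E.
Proof.
move=> c_ge0 c_le1 a_ge0 a_le_b b_le1.
rewrite probability_box => [|k|]; [|exact: measurable_below_box|exact: measurable_itv].
rewrite (bigD1 k1) //= [X in (_ * X * _)%E]big1 ?mule1 => [|k k_neq]; last first.
  by rewrite big1 // => j _; rewrite /below_box (negbTE k_neq) score_law_itv1.
rewrite /below_box /score_law eqxx /unif01.
rewrite (eq_bigr (fun=> c%:E)) => [|j _]; last by rewrite uniform_prob_itv // !subr0 divr1.
by rewrite uniform_prob_itv // !subr0 divr1 prodEFin prodr_const card_ord -!EFinM.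
Qed.

Lemma below_box_cell_sub N (i : 'I_N) :
  box (below_box (i%:R / N%:R)) k1 (cell R N i) `<=` typical k1 `&` above_k1.
Proof.
have [iN_ge0 iN_le iN_le1] := cell_endpoints R i.
move=> w [[cal_in G_w] [_ test_in]].
move: test_in; rewrite /cell /= in_itv /= => /andP[i_le lt_i1].
have cal1_lt j : 0 <= y_cal k1 j w < i%:R / N%:R.
  by have [_] := cal_in k1 I j I; rewrite /below_box eqxx /= in_itv.
split; last by move=> j _; have /andP[_ cal_lt] := cal1_lt j; exact: lt_le_trans i_le.
split; [split|] => //.
  move=> k _ j _; split => //=; apply: below_box_sub (le_trans iN_le iN_le1) _ _.
  by have [] := cal_in k I j I.
split=> //=; rewrite /score_lo /score_hi eqxx in_itv /= (lt_le_trans lt_i1) // andbT.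
have /andP[cal_ge0 cal_lt] := cal1_lt (Ordinal (hn k1)).
by rewrite (le_lt_trans cal_ge0) // (lt_le_trans cal_lt).
Qed.

Lemma above_k1_sub_cells N : (0 < N)%N -> typical k1 `&` above_k1 `<=`
  \big[setU/set0]_(i < N) box (below_box (i.+1%:R / N%:R)) k1 (cell R N i).
Proof.
move=> N_gt0 w [typ cal_lt]; have [cal_in] := typicalP typ.
rewrite /score_lo /score_hi eqxx => /andP[test_gt0 test_lt1].
have i_lt_N : (Num.truncn (y_test w * N%:R) < N)%N.
  by rewrite truncn_lt_nat ?mulr_ge0 ?ler0n ?ltW // gtr_pMl ?ltr0n.
apply/bigsetU_ordP; exists (Ordinal i_lt_N); set i := Num.truncn _.
have test_cell : cell R N i (y_test w) by apply/(cellE _ _ _ _ N_gt0); split; rewrite ?ltW.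
have [[_ G_w] _] := typ; split; [split|] => //=.
move=> k _ j _; split => //=; rewrite /below_box; case: (eqVneq k k1) => [k_eq|k_neq].
  subst k; have /andP[cal_ge0 _] := cal_in k1 j; rewrite /score_lo eqxx in cal_ge0.
  move: test_cell; rewrite /cell /= !in_itv /= cal_ge0 => /andP[_].
  exact/lt_trans/cal_lt.
by have := cal_in k j; rewrite /= in_itv.
Qed.

Lemma probability_cells N (c : 'I_N -> R) : (forall i, 0 <= c i <= 1) ->
  P (\big[setU/set0]_(i < N) box (below_box (c i)) k1 (cell R N i)) =
  (K%:R^-1 * \sum_(i < N) c i ^+ n k1 / N%:R)%:E.
Proof.
move=> c01; rewrite measure_bigsetU_ord => [|i|]; last 2 first.
- by apply: measurable_box => [k|]; [exact: measurable_below_box | exact: measurable_itv].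
- move=> i j _ _ [w [[_ [_ /= w_i]] [_ [_ /= w_j]]]].
  have N_gt0 : (0 < N)%N by apply: leq_ltn_trans (ltn_ord i).
  move/(cellE _ _ _ _ N_gt0): w_i => [_ t_i]; move/(cellE _ _ _ _ N_gt0): w_j => [_ t_j].
  by apply: val_inj; rewrite /= -t_i -t_j.
rewrite mulr_sumr -sumEFin; apply: eq_bigr => i _.
have [iN_ge0 iN_le iN_le1] := cell_endpoints R i.
have /andP[c_ge0 c_le1] := c01 i.
rewrite /cell; apply: eq_trans (probability_below_box c_ge0 c_le1 iN_ge0 iN_le iN_le1) _.
by rewrite -mulrBl -natrB // subSnn mul1r mulrCA.
Qed.

Lemma probability_above_k1 :
  P (typical k1 `&` above_k1) = (K%:R^-1 * (n k1).+1%:R^-1)%:E.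
Proof.
have m_above : measurable (typical k1 `&` above_k1).
  exact: measurableI (measurable_typical k1) measurable_above_k1.
have K_gt0 : 0 < K%:R :> R by rewrite ltr0n.
set p := fine (P (typical k1 `&` above_k1)).
have Pp : P (typical k1 `&` above_k1) = p%:E.
  by rewrite fineK // ge0_fin_numE // (le_lt_trans (probability_le1 P m_above)) ?ltry.
rewrite Pp; congr (_%:E); apply: (mulfI (lt0r_neq0 K_gt0)); rewrite mulVKf ?lt0r_neq0 //.
apply: power_sums_squeeze => N N_gt0.
have m_cells (c : 'I_N -> R) :
    measurable (\big[setU/set0]_(i < N) box (below_box (c i)) k1 (cell R N i)).
  apply: bigsetU_measurable => i _; apply: measurable_box => [k|].
    exact: measurable_below_box.
  exact: measurable_itv.
apply/andP; split.
- pose lower_cells := \big[setU/set0]_(i < N) box (below_box (i%:R / N%:R)) k1 (cell R N i).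
  have : (P lower_cells <= P (typical k1 `&` above_k1))%E.
    apply: le_measure; rewrite ?inE //; first exact: m_cells.
    by move=> w /bigsetU_ordP[i]; apply: below_box_cell_sub.
  rewrite Pp probability_cells => [|i]; last first.
    by have [-> iN_le iN_le1] := cell_endpoints R i; rewrite (le_trans iN_le).
  by rewrite lee_fin ler_pdivrMl.
- pose upper_cells := \big[setU/set0]_(i < N) box (below_box (i.+1%:R / N%:R)) k1 (cell R N i).
  have : (P (typical k1 `&` above_k1) <= P upper_cells)%E.
    by apply: le_measure; rewrite ?inE //; [exact: m_cells | exact: above_k1_sub_cells].
  rewrite Pp probability_cells => [|i]; last first.
    by have [iN_ge0 iN_le ->] := cell_endpoints R i; rewrite (le_trans iN_ge0).
  by rewrite lee_fin ler_pdivlMl.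
Qed.

Lemma probability_covered_typical g : P (covered `&` typical g) =
  (K%:R^-1 * (((g < m)%N)%:R - (g == k1)%:R / (n k1).+1%:R))%:E.
Proof.
have [->|g_neq] := eqVneq g k1.
  have -> : covered `&` typical k1 = typical k1 `\` above_k1.
    apply/seteqP; split=> w.
      move=> [cov_w typ]; split=> // all_lt; have [j test_le] := (covered_k1 typ).1 cov_w.
      by move: (all_lt j I); rewrite /= ltNge test_le.
    move=> [typ not_max]; split=> //; apply/(covered_k1 typ).
    apply: contrapT => none; apply: not_max => j _.
    by rewrite /= ltNge; apply/negP => test_le; apply: none; exists j.
  have -> : P (typical k1 `\` above_k1) =
      (P (typical k1) - P (typical k1 `&` above_k1))%E.
    apply: measureD; [exact: measurable_typical | exact: measurable_above_k1 |].
    exact: le_lt_trans (probability_le1 P (measurable_typical k1)) (ltry 1).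
  rewrite probability_typical probability_above_k1 k1_lt_m.
  by rewrite -EFinB /= mulrBr mulr1 mul1r.
case: ltnP => [g_lt|m_le_g].
  have -> : covered `&` typical g = typical g.
    by apply/setIidr => w; apply: covered_lower.
  by rewrite probability_typical /= mul0r subr0 mulr1.
have -> : covered `&` typical g = set0.
  by apply/seteqP; split=> w // [cov_w typ]; exact: not_covered_upper m_le_g typ cov_w.
by rewrite measure0 /= mul0r subr0 mulr0.
Qed.

Lemma trivIset_typical : trivIset setT typical.
Proof. by move=> g g' _ _ [w [[[_ G_g] _] [[_ G_g'] _]]]; rewrite -G_g -G_g'. Qed.

Lemma probability_typical_cover : P (\big[setU/set0]_(g < K) typical g) = 1%E.
Proof.
rewrite measure_bigsetU_ord => [|g|]; [|exact: measurable_typical|exact: trivIset_typical].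
rewrite (eq_bigr (fun=> (K%:R^-1)%:E)) => [|g _]; last exact: probability_typical.
by rewrite sumEFin sumr_const card_ord -[_ *+ K]mulr_natr mulVf // pnatr_eq0 -lt0n.
Qed.

Lemma probability_covered : P covered = (K%:R^-1 * (m%:R - (n k1).+1%:R^-1))%:E.
Proof.
have m_cover : measurable (\big[setU/set0]_(g < K) typical g).
  by apply: bigsetU_measurable => g _; exact: measurable_typical.
rewrite -(probability_setI_full P m_cover measurable_covered probability_typical_cover).
have -> : covered `&` \big[setU/set0]_(g < K) typical g =
    \big[setU/set0]_(g < K) (covered `&` typical g).
  apply/seteqP; split=> w.
    by move=> [cov_w /bigsetU_ordP[g typ]]; apply/bigsetU_ordP; exists g.
  by move=> /bigsetU_ordP[g [cov_w typ]]; split=> //; apply/bigsetU_ordP; exists g.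
rewrite measure_bigsetU_ord => [|g|]; last 2 first.
- exact: measurableI measurable_covered (measurable_typical g).
- by move=> g g' _ _ [w [[_ typ] [_ typ']]]; apply: trivIset_typical => //; exists w.
transitivity (\sum_(g < K)
    (K%:R^-1 * (((g < m)%N)%:R - (g == k1)%:R / (n k1).+1%:R) : R)%:E)%E.
  by apply: eq_bigr => g _; exact: probability_covered_typical.
rewrite sumEFin -mulr_sumr sumrB sum_lt_m -mulr_suml (bigD1 k1) //= eqxx.
by rewrite big1 => [|g /negbTE->//]; rewrite addr0 mul1r.
Qed.

Lemma coverage_probability :
  P [set w | (W w).2 \in gwcp_set n (fun _ => K%:R^-1) alpha (fun x y => y)
                           (fun k j => Z k j w) (G w, (W w).1)]
  = (1 - alpha - (K%:R * ((n k1)%:R + 1))^-1)%:E.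
Proof.
rewrite coverage_eventE probability_covered one_sub_alphaE natr1; congr EFin.
have K_neq0 : K%:R != 0 :> R by rewrite pnatr_eq0 -lt0n.
by field; rewrite K_neq0 andbT addrC natr1 pnatr_eq0.
Qed.

End gwcp_undercoverage.

Arguments coverage_probability {R d T P d1 X1 K alpha m n k1 Pi Z G W}.

Theorem proposition2
  (R : realType) (d : measure_display) (T : measurableType d) (P : probability T R)
  (d1 : measure_display) (X1 : measurableType d1)
  (K : nat) (hK : (0 < K)%N) (alpha : R) (halpha : 0 < alpha < 1)
  (m : nat) (hm : (0 < m)%N) (hmK : (1 - alpha) * K%:R = m%:R)
  (n : 'I_K -> nat) (hn : forall k, (0 < n k)%N)
  (k1 : 'I_K) (hk1 : nat_of_ord k1 = 0%N) (hmin : forall k, (n k1 <= n k)%N)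
  (Pi : 'I_K -> probability (X1 * R)%type R)
  (hPi1 : forall B, measurable B -> Pi k1 (setT `*` B) = unif01 B)
  (hPi2 : forall (k : 'I_K) B, (1 <= k < m)%N -> measurable B ->
            Pi k (setT `*` B) = unifN10 B)
  (hPi3 : forall (k : 'I_K) B, (m <= k)%N -> measurable B ->
            Pi k (setT `*` B) = unif12 B)
  (Z : forall k : 'I_K, 'I_(n k) -> T -> (X1 * R)%type)
  (G : T -> 'I_K) (W : T -> (X1 * R)%type)
  (hZmeas : forall k j, measurable_fun setT (Z k j))
  (hGmeas : forall k, measurable (G @^-1` [set k]))
  (hWmeas : measurable_fun setT W)
  (hZlaw : forall k j A, measurable A -> P (Z k j @^-1` A) = Pi k A)
  (hGlaw : forall k, P (G @^-1` [set k]) = (K%:R^-1)%:E)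
  (hWlaw : forall k A, measurable A ->
            P (G @^-1` [set k] `&` W @^-1` A) = ((K%:R^-1)%:E * Pi k A)%E)
  (hind : independent_data P n Z G W) :
  P [set w | (W w).2 \in
       gwcp_set n (fun _ => K%:R^-1) alpha (fun x y => y)
                (fun k j => Z k j w) (G w, (W w).1)]
  = (1 - alpha - (K%:R * ((n k1)%:R + 1))^-1)%:E.
Proof.
exact: coverage_probability hK halpha hm hmK hn hk1 hPi1 hPi2 hPi3
  hZmeas hGmeas hWmeas hZlaw hWlaw hind.
Qed.
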